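(* Let $T$ be a complete theory and $R(x,y)$ a binary relation (formula) of $T$. Suppose that for some $0<\delta<1$ and for all $\epsilon$ with $0<\epsilon<1$ and all $n\in\mathbb{N}$ there is a finite bipartite $R$-graph $(X,Y)$ with $|X|=|Y|\geq n$ which is $\epsilon$-regular with density $d$, where $|d-\delta|<\epsilon$. Then $R$ has the order property.
   Context: Work in a sufficiently saturated model of $T$. A finite bipartite $R$-graph $(X,Y)$ consists of disjoint finite sets $X,Y$ of tuples of the appropriate lengths, with an edge between $x\in X$ and $y\in Y$ iff $R(x,y)$. Its density is $e(X,Y)/|X||Y|$ where $e(X,Y)$ is the number of edges. $(X,Y)$ is $\epsilon$-regular if for all $X'\subseteq X$, $Y'\subseteq Y$ with $|X'|\ge\epsilon|X|$, $|Y'|\ge\epsilon|Y|$, the densities of $(X,Y)$ and $(X',Y')$ differ by less than $\epsilon$. $R$ has the order property if there are $\langle a_i,b_i:i<\omega\rangle$ with $R(a_i,b_j)$ iff $i<j$. *)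

From Stdlib Require Import Reals ClassicalDescription.
From mathcomp Require Import all_boot.
Set Implicit Arguments.
Unset Strict Implicit.
Unset Printing Implicit Defensive.

Record signature := Signature {
  fsym : Type; farity : fsym -> nat;
  rsym : Type; rarity : rsym -> nat }.

Section FOL.
Variable L : signature.

Inductive term : Type :=
| tvar : nat -> term
| tapp : forall f : fsym L, ('I_(farity f) -> term) -> term.

Inductive formula : Type :=
| fequal : term -> term -> formula
| frel : forall r : rsym L, ('I_(rarity r) -> term) -> formula
| fneg : formula -> formula
| fand : formula -> formula -> formula
| fex : nat -> formula -> formula.

Fixpoint occurs (v : nat) (t : term) : Prop :=
  match t with
  | tvar w => v = w
  | tapp f ts => exists i, occurs v (ts i)
  end.

Fixpoint free_in (v : nat) (phi : formula) : Prop :=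
  match phi with
  | fequal t1 t2 => occurs v t1 \/ occurs v t2
  | frel r ts => exists i, occurs v (ts i)
  | fneg psi => free_in v psi
  | fand psi chi => free_in v psi \/ free_in v chi
  | fex x psi => v <> x /\ free_in v psi
  end.

Definition sentence (phi : formula) : Prop := forall v, ~ free_in v phi.

Record structure := Structure {
  carrier :> Type;
  point : carrier;
  ifun : forall f : fsym L, ('I_(farity f) -> carrier) -> carrier;
  irel : forall r : rsym L, ('I_(rarity r) -> carrier) -> Prop }.

Fixpoint eval (M : structure) (e : nat -> M) (t : term) : M :=
  match t with
  | tvar v => e v
  | tapp f ts => ifun (fun i => eval e (ts i))
  end.

Definition upd (M : structure) (e : nat -> M) (x : nat) (a : M) : nat -> M :=
  fun v => if v == x then a else e v.

Fixpoint sat (M : structure) (e : nat -> M) (phi : formula) : Prop :=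
  match phi with
  | fequal t1 t2 => eval e t1 = eval e t2
  | frel r ts => irel (fun i => eval e (ts i))
  | fneg psi => ~ sat e psi
  | fand psi chi => sat e psi /\ sat e chi
  | fex x psi => exists a : M, sat (upd e x a) psi
  end.

Definition theory := formula -> Prop.

Definition models (M : structure) (T : theory) : Prop :=
  forall phi, T phi -> forall e : nat -> M, sat e phi.

Definition complete_theory (T : theory) : Prop :=
  (forall phi, T phi -> sentence phi) /\
  (exists M : structure, models M T) /\
  (forall phi, sentence phi ->
     (forall M : structure, models M T -> forall e : nat -> M, sat e phi) \/
     (forall M : structure, models M T -> forall e : nat -> M, ~ sat e phi)).

(** omega-saturation: every finitely satisfiable set of formulas in the
    variable 0 with finitely many parameters (assigned to variables 1..n)
    is realized. *)
Definition omega_saturated (M : structure) : Prop :=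
  forall (n : nat) (params : nat -> M) (p : formula -> Prop),
    (forall phi, p phi -> forall v, free_in v phi -> (v <= n)%N) ->
    (forall ls : seq formula, (forall phi, List.In phi ls -> p phi) ->
       exists a : M, forall phi, List.In phi ls -> sat (upd params 0 a) phi) ->
    exists a : M, forall phi, p phi -> sat (upd params 0 a) phi.

End FOL.

(** * The relation R(x,y) given by a formula whose free variables are among
    0..k+l-1; x is the tuple of variables 0..k-1, y the tuple k..k+l-1. *)

Section Graphs.
Variables (L : signature) (M : structure L) (phi : formula L) (k l : nat).

Definition fv_bounded : Prop := forall v, free_in v phi -> (v < k + l)%N.

Definition Rrel (a b : seq M) : Prop :=
  sat (fun v => nth (point M) (a ++ b) v) phi.

Definition Rb (a b : seq M) : bool :=
  if excluded_middle_informative (Rrel a b) then true else false.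

(** A finite bipartite R-graph (X,Y): X, Y are finite sets of tuples
    (given by injective enumerations) of lengths k and l, disjoint. *)
Definition bipartite_Rgraph (mX mY : nat) (X : 'I_mX -> seq M) (Y : 'I_mY -> seq M) : Prop :=
  (forall i, size (X i) = k) /\ (forall j, size (Y j) = l) /\
  injective X /\ injective Y /\ (forall i j, X i <> Y j).

Definition edges (mX mY : nat) (X : 'I_mX -> seq M) (Y : 'I_mY -> seq M)
  (A : {set 'I_mX}) (B : {set 'I_mY}) : nat :=
  #|[set p : 'I_mX * 'I_mY | [&& p.1 \in A, p.2 \in B & Rb (X p.1) (Y p.2)]]|.

Definition density (mX mY : nat) (X : 'I_mX -> seq M) (Y : 'I_mY -> seq M)
  (A : {set 'I_mX}) (B : {set 'I_mY}) : R :=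
  Rdiv (INR (edges X Y A B)) (Rmult (INR #|A|) (INR #|B|)).

Definition eps_regular (eps : R) (mX mY : nat) (X : 'I_mX -> seq M) (Y : 'I_mY -> seq M) : Prop :=
  forall (A : {set 'I_mX}) (B : {set 'I_mY}),
    Rle (Rmult eps (INR mX)) (INR #|A|) -> Rle (Rmult eps (INR mY)) (INR #|B|) ->
    Rlt (Rabs (Rminus (density X Y A B) (density X Y setT setT))) eps.

Definition order_property : Prop :=
  exists a b : nat -> seq M,
    (forall i, size (a i) = k) /\ (forall j, size (b j) = l) /\
    (forall i j, Rrel (a i) (b j) <-> (i < j)%N).

End Graphs.

From Pilot Require Import Defs.
From Stdlib Require Import Reals Lra ClassicalEpsilon FunctionalExtensionality.
From mathcomp Require Import all_boot zify.
Set Implicit Arguments.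
Unset Strict Implicit.
Unset Printing Implicit Defensive.

(* In an eps-regular pair of density close to delta, for small eps both R and its
   complement have density bounded away from 0 on every eps-large subpair.  So
   most vertices on either side have many neighbours (resp. non-neighbours), and a
   non-edge (a, b) between such vertices exists; recursing inside the neighbours
   of a and the non-neighbours of b, which costs a constant factor each time,
   produces half graphs R(a_i, b_j) <-> i < j of every finite size.  The statement
   "the elements chosen so far extend to a half graph of size K" is first-order,
   so omega-saturation realizes it for all K at once, one element at a time; the
   limit of this chain is an infinite half graph. *)

Section Renaming.
Variable L : signature.

Fixpoint rename_term (s : nat -> nat) (t : term L) : term L :=
  match t with
  | tvar v => tvar L (s v)
  | tapp f ts => tapp (fun i => rename_term s (ts i))
  end.

Fixpoint rename (s : nat -> nat) (p : formula L) : formula L :=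
  match p with
  | fequal t1 t2 => fequal (rename_term s t1) (rename_term s t2)
  | Defs.frel r ts => Defs.frel (fun i => rename_term s (ts i))
  | fneg q => fneg (rename s q)
  | fand q1 q2 => fand (rename s q1) (rename s q2)
  | fex x q => fex (s x) (rename s q)
  end.

Lemma occurs_rename_term s v t :
  occurs v (rename_term s t) -> exists2 u, v = s u & occurs u t.
Proof.
elim: t => [w ->|f ts IH [i /IH [u -> hu]]]; first by exists w.
by exists u => //; exists i.
Qed.

Lemma free_in_rename s p v :
  free_in v (rename s p) -> exists2 u, v = s u & free_in u p.
Proof.
elim: p v => [t1 t2|r ts|q IH|q1 IH1 q2 IH2|x q IH] v /=.
- by case=> /occurs_rename_term [u -> hu]; exists u => //; [left|right].
- by case=> i /occurs_rename_term [u -> hu]; exists u => //; exists i.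
- exact: IH.
- by case=> [/IH1|/IH2] [u -> hu]; exists u => //; [left|right].
- case=> hx /IH [u hvu hu]; exists u => //; split=> // hux.
  by apply: hx; rewrite hvu hux.
Qed.

Variable M : structure L.

Lemma eval_rename_term s (e : nat -> M) t :
  eval e (rename_term s t) = eval (e \o s) t.
Proof.
elim: t => //= f ts IH; congr ifun.
by apply: functional_extensionality.
Qed.

Lemma eq_eval (e1 e2 : nat -> M) t :
  (forall v, occurs v t -> e1 v = e2 v) -> eval e1 t = eval e2 t.
Proof.
elim: t => [v|f ts IH] h /=; first exact: h.
congr ifun; apply: functional_extensionality => i.
by apply: IH => v hv; apply: h; exists i.
Qed.

Lemma eq_sat (e1 e2 : nat -> M) p :
  (forall v, free_in v p -> e1 v = e2 v) -> sat e1 p <-> sat e2 p.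
Proof.
elim: p e1 e2 => [t1 t2|r ts|q IH|q1 IH1 q2 IH2|x q IH] e1 e2 h /=.
- by rewrite (eq_eval (e2 := e2) (t := t1)) ?(eq_eval (e2 := e2) (t := t2)) //
    => v hv; apply: h; [right|left].
- suff -> : (fun i => eval e1 (ts i)) = (fun i => eval e2 (ts i)) by [].
  apply: functional_extensionality => i; apply: eq_eval => v hv.
  by apply: h; exists i.
- by rewrite (IH e1 e2 h).
- by rewrite (IH1 e1 e2) ?(IH2 e1 e2) // => v hv; apply: h; [right|left].
- suff E a : sat (upd e1 x a) q <-> sat (upd e2 x a) q.
    by split=> -[a ha]; exists a; apply/E.
  apply: IH => v hv; rewrite /upd; case: eqP => // hvx.
  exact: h.
Qed.

Lemma sat_rename s p (e : nat -> M) :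
  injective s -> sat e (rename s p) <-> sat (e \o s) p.
Proof.
move=> inj_s; elim: p e => [t1 t2|r ts|q IH|q1 IH1 q2 IH2|x q IH] e /=.
- by rewrite !eval_rename_term.
- suff -> : (fun i => eval e (rename_term s (ts i))) = (fun i => eval (e \o s) (ts i)).
    by [].
  by apply: functional_extensionality => i; rewrite eval_rename_term.
- by rewrite IH.
- by rewrite IH1 IH2.
- suff E a : sat (upd e (s x) a) (rename s q) <-> sat (upd (e \o s) x a) q.
    by split=> -[a ha]; exists a; apply/E.
  rewrite IH; apply: eq_sat => v _.
  by rewrite /upd /= (inj_eq inj_s).
Qed.

Fixpoint fexs (vs : seq nat) (p : formula L) : formula L :=
  if vs is v :: vs' then fex v (fexs vs' p) else p.

Lemma sat_fexs vs p (e : nat -> M) :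
  sat e (fexs vs p) <-> exists f : nat -> M, sat (fun v => if v \in vs then f v else e v) p.
Proof.
elim: vs e => [|v vs IH] e /=; first by split=> [he|[f]//]; exists e.
split.
- case=> a /IH [f hf]; exists (fun u => if u \in vs then f u else a).
  move: hf; apply: iffLR; apply: eq_sat => u _; rewrite /upd in_cons.
  by case: (u \in vs); rewrite ?orbT //; case: eqP.
- case=> f hf; exists (f v); apply/IH; exists f; move: hf; apply: iffLR; apply: eq_sat => u _.
  rewrite /upd in_cons; case: (u \in vs); rewrite ?orbT //.
  by case: eqP => [->|].
Qed.

Lemma free_in_fexs vs p v : free_in v (fexs vs p) -> v \notin vs /\ free_in v p.
Proof.
elim: vs => [|u vs IH] //= [hvu /IH [hv hp]]; split=> //.
by rewrite in_cons negb_or hv andbT; apply/eqP.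
Qed.

Definition ftrue : formula L := fneg (fex 0 (fneg (fequal (tvar L 0) (tvar L 0)))).

Fixpoint fbigand (n : nat) (g : nat -> formula L) : formula L :=
  if n is n'.+1 then fand (g n') (fbigand n' g) else ftrue.

Lemma sat_fbigand n g (e : nat -> M) :
  sat e (fbigand n g) <-> forall i, i < n -> sat e (g i).
Proof.
elim: n => [|n IH] /=; first by split=> // _ [a]; apply.
rewrite IH; split.
- by case=> hn hlt i; rewrite ltnS leq_eqVlt => /predU1P [->|/hlt].
- by move=> h; split=> [|i hi]; apply: h => //; apply: ltnW.
Qed.

Lemma free_in_fbigand n g v :
  free_in v (fbigand n g) -> exists2 i, i < n & free_in v (g i).
Proof.
elim: n => [|n IH] /=; first by case=> hv [] /hv.
by case=> [h|/IH [i hi h]]; [exists n|exists i; first exact: ltnW].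
Qed.

End Renaming.

Local Open Scope R_scope.

Section Density.
Variables (I J : finType) (F : I -> J -> bool).

Definition nbhd (B : {set J}) (a : I) : {set J} := [set b in B | F a b].

Definition edge_count (A : {set I}) (B : {set J}) : nat :=
  (\sum_(a in A) \sum_(b in B) F a b)%N.

Definition edge_density (A : {set I}) (B : {set J}) : R :=
  INR (edge_count A B) / (INR #|A| * INR #|B|).

Lemma card_nbhd B a : #|nbhd B a| = (\sum_(b in B) F a b)%N.
Proof.
rewrite -sum1_card big_mkcond [RHS]big_mkcond; apply: eq_bigr => b _.
by rewrite !inE; case: (b \in B); case: (F a b).
Qed.

Lemma edge_density_le (S : {set I}) (B : {set J}) (c : R) :
  (0 < #|S|)%N -> (0 < #|B|)%N ->
  (forall a, a \in S -> INR #|nbhd B a| <= c * INR #|B|) -> edge_density S B <= c.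
Proof.
move=> /ltP/lt_0_INR hS /ltP/lt_0_INR hB hdeg.
have hcount : INR (edge_count S B) <= c * INR #|B| * INR #|S|.
  rewrite /edge_count -[X in _ * INR X]sum1_card.
  apply: (big_ind2 (fun x n => INR x <= c * INR #|B| * INR n)) => /=.
  - lra.
  - by move=> x1 x2 n1 n2 h1 h2; rewrite !plus_INR; lra.
  - by move=> a /hdeg; rewrite -card_nbhd /=; lra.
rewrite /edge_density; apply: (Rmult_le_reg_r (INR #|S| * INR #|B|)); first nra.
rewrite /Rdiv Rmult_assoc Rinv_l; nra.
Qed.

Lemma edge_of_edge_density_gt0 A B :
  0 < edge_density A B -> exists a b, [/\ a \in A, b \in B & F a b].
Proof.
move=> hd; apply: NNPP => hno; move: hd; rewrite /edge_density.
suff -> : edge_count A B = 0%N by rewrite /= /Rdiv Rmult_0_l; lra.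
rewrite /edge_count big1 // => a ha; rewrite big1 // => b hb.
by apply/eqP; rewrite eqb0; apply/negP => hab; apply: hno; exists a, b.
Qed.

End Density.

Definition coedge (I J : Type) (F : I -> J -> bool) : J -> I -> bool :=
  fun b a => ~~ F a b.

Lemma edge_count_coedge (I J : finType) (F : I -> J -> bool) (A : {set I}) (B : {set J}) :
  (edge_count (coedge F) B A + edge_count F A B = #|A| * #|B|)%N.
Proof.
rewrite /edge_count /coedge exchange_big -big_split -sum_nat_const.
apply: eq_bigr => a _; rewrite -big_split -sum1_card.
by apply: eq_bigr => b _; case: (F a b).
Qed.

Lemma edge_density_coedge (I J : finType) (F : I -> J -> bool) (A : {set I}) (B : {set J}) :
  (0 < #|A|)%N -> (0 < #|B|)%N -> edge_density (coedge F) B A = 1 - edge_density F A B.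
Proof.
move=> /ltP/lt_0_INR hA /ltP/lt_0_INR hB.
have := f_equal INR (edge_count_coedge F A B); rewrite plus_INR mult_INR => E.
rewrite /edge_density; field_simplify; [|lra|lra]; field_simplify_eq; lra.
Qed.

Definition dense_pair (I J : finType) (F : I -> J -> bool) (r c : R) : Prop :=
  forall (A : {set I}) (B : {set J}),
    r <= INR #|A| -> r <= INR #|B| -> c < edge_density F A B.

Lemma dense_pair_weaken (I J : finType) (F : I -> J -> bool) (r c c' : R) :
  dense_pair F r c -> c' <= c -> dense_pair F r c'.
Proof. by move=> hF hc A B hA hB; apply: Rle_lt_trans hc (hF A B hA hB). Qed.

Lemma card_gt0_of_le (T : finType) (S : {set T}) (r : R) :
  0 < r -> r <= INR #|S| -> (0 < #|S|)%N.
Proof. by move=> hr hS; apply/ltP/INR_lt; rewrite /=; lra. Qed.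

Lemma high_degree_large (I J : finType) (F : I -> J -> bool) (r c : R)
    (A : {set I}) (B : {set J}) :
  0 < r -> dense_pair F r c -> r <= INR #|B| ->
  INR #|A| < r + INR #|[set a in A | Rle_dec (c * INR #|B|) (INR #|nbhd F B a|)]|.
Proof.
move=> hr hF hB; set H := [set a in A | _].
have hHA : H \subset A by apply/subsetP => a; rewrite inE => /andP[].
have hsplit : INR #|A| = INR #|H| + INR #|A :\: H|.
  by rewrite -plus_INR -(cardsID H A) (setIidPr hHA).
suff : INR #|A :\: H| < r by lra.
apply: Rnot_le_lt => hlow.
have := hF _ _ hlow hB; apply/Rle_not_lt/edge_density_le.
- exact: card_gt0_of_le hlow.
- exact: card_gt0_of_le hB.
- move=> a; rewrite !inE => /andP [+ ha]; rewrite ha /=.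
  by case: Rle_dec => // hn _; lra.
Qed.

Section DensePairs.
Variables (I J : finType) (F : I -> J -> bool) (r c : R).
Hypotheses (r_gt0 : 0 < r) (c_gt0 : 0 < c) (c_le1 : c <= 1).
Hypotheses (F_dense : dense_pair F r c) (coF_dense : dense_pair (coedge F) r c).

Lemma dense_non_edge_step (A : {set I}) (B : {set J}) :
  2 * r <= INR #|A| -> 2 * r <= INR #|B| ->
  exists a b, [/\ a \in A, b \in B, ~~ F a b,
    c * INR #|A| <= INR #|nbhd (coedge F) A b| & c * INR #|B| <= INR #|nbhd F B a|].
Proof.
move=> hA hB.
(* Fewer than r vertices on each side have low degree, so the high-degree parts
   are r-large and the complement of F has an edge between them. *)
have hAg := high_degree_large A r_gt0 F_dense (ltac:(lra) : r <= INR #|B|).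
have hBg := high_degree_large B r_gt0 coF_dense (ltac:(lra) : r <= INR #|A|).
set Ag := [set a in A | _] in hAg; set Bg := [set b in B | _] in hBg.
have := coF_dense (ltac:(lra) : r <= INR #|Bg|) (ltac:(lra) : r <= INR #|Ag|).
move/(Rlt_trans _ _ _ c_gt0)/edge_of_edge_density_gt0 => [b [a [hb ha hab]]].
move: ha hb; rewrite !inE => /andP [ha ha_deg] /andP [hb hb_deg].
by exists a, b; split=> //; move: ha_deg hb_deg; do 2 case: Rle_dec.
Qed.

Lemma half_graph_of_dense_pair (i0 : I) (j0 : J) s (A : {set I}) (B : {set J}) :
  2 * r <= c ^ s * INR #|A| -> 2 * r <= c ^ s * INR #|B| ->
  exists (a : nat -> I) (b : nat -> J),
    [/\ forall i, (i < s)%N -> a i \in A, forall j, (j < s)%N -> b j \in B &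
        forall i j, (i < s)%N -> (j < s)%N -> F (a i) (b j) = (i < j)%N].
Proof.
elim: s A B => [|s IH] A B hA hB; first by exists (fun _ => i0), (fun _ => j0).
have cs_gt0 : 0 < c ^ s by apply: pow_lt.
have cs_le1 : c ^ s <= 1 by rewrite -(pow1 s); apply: pow_incr; lra.
have cSs_le1 : c ^ s.+1 <= 1 by rewrite /=; nra.
have := Rmult_le_compat_r _ _ _ (pos_INR #|A|) cSs_le1.
have := Rmult_le_compat_r _ _ _ (pos_INR #|B|) cSs_le1.
move=> hB1 hA1; rewrite /= in hA hB hA1 hB1.
have [a0 [b0 [ha0 hb0 hab0 hA' hB']]] :=
  dense_non_edge_step (A := A) (B := B) ltac:(lra) ltac:(lra).
have := Rmult_le_compat_l _ _ _ (Rlt_le _ _ cs_gt0) hA'.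
have := Rmult_le_compat_l _ _ _ (Rlt_le _ _ cs_gt0) hB'.
move=> hB2 hA2.
have [a [b [ha hb hab]]] := IH (nbhd (coedge F) A b0) (nbhd F B a0) ltac:(lra) ltac:(lra).
exists (fun i => if i is i'.+1 then a i' else a0), (fun j => if j is j'.+1 then b j' else b0).
split=> [[|i] hi|[|j] hj|[|i] [|j] hi hj] //=.
- by have := ha i hi; rewrite inE => /andP [].
- by have := hb j hj; rewrite inE => /andP [].
- exact: negbTE.
- by have := hb j hj; rewrite inE => /andP [].
- by have := ha i hi; rewrite inE => /andP [_ /negbTE].
- exact: hab.
Qed.

End DensePairs.

Lemma regular_dense_pair (I J : finType) (F : I -> J -> bool) (r eps delta : R) :
  0 < r ->
  (forall (A : {set I}) (B : {set J}), r <= INR #|A| -> r <= INR #|B| ->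
     Rabs (edge_density F A B - edge_density F setT setT) < eps) ->
  Rabs (edge_density F setT setT - delta) < eps ->
  dense_pair F r (delta - 2 * eps) /\ dense_pair (coedge F) r (1 - delta - 2 * eps).
Proof.
move=> r_gt0 hreg /Rabs_def2 [hd1 hd2].
have hclose (A : {set I}) (B : {set J}) : r <= INR #|A| -> r <= INR #|B| ->
    delta - 2 * eps < edge_density F A B < delta + 2 * eps.
  by move=> hA hB; have /Rabs_def2 := hreg A B hA hB; lra.
split=> B A hB hA; first by have := hclose B A hB hA; lra.
rewrite edge_density_coedge; [|exact: card_gt0_of_le hA|exact: card_gt0_of_le hB].
by have := hclose A B hA hB; lra.
Qed.

Section RegularPairs.
Variables (L : signature) (M : structure L) (phi : formula L) (k l : nat).
Local Open Scope nat_scope.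

Definition half_graph (K : nat) (x y : nat -> seq M) : Prop :=
  forall i j, i < K -> j < K -> (Rrel phi (x i) (y j) <-> i < j).

Lemma RbP (a b : seq M) : reflect (Rrel phi a b) (Rb phi a b).
Proof.
by rewrite /Rb; case: ClassicalDescription.excluded_middle_informative; constructor.
Qed.

Lemma density_edge_density m (X Y : 'I_m -> seq M) A B :
  density phi X Y A B = edge_density (fun i j => Rb phi (X i) (Y j)) A B.
Proof.
congr (Rdiv (INR _) _); rewrite /edges /edge_count -sum1_card pair_big /=.
rewrite big_mkcond [RHS]big_mkcond; apply: eq_bigr => -[i j] _ /=; rewrite !inE /=.
by case: (i \in A); case: (j \in B); case: (Rb _ _ _).
Qed.

Local Open Scope R_scope.

Lemma finite_half_graphs (delta : R) :
  0 < delta < 1 ->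
  (forall eps : R, 0 < eps /\ eps < 1 -> forall n : nat,
     exists (m : nat) (X Y : 'I_m -> seq M),
       (n <= m)%N /\ bipartite_Rgraph k l X Y /\ eps_regular phi eps X Y /\
       Rabs (density phi X Y setT setT - delta) < eps) ->
  forall K, exists x y : nat -> seq M,
    [/\ forall i, size (x i) = k, forall j, size (y j) = l & half_graph K x y].
Proof.
move=> [delta_gt0 delta_lt1] hyp K.
(* With these constants both F and its complement have density above c on
   eps*m-large subpairs, and K steps of shrinking by the factor c still leave
   2 eps m vertices. *)
pose c := Rmin delta (1 - delta) / 4.
have c_gt0 : 0 < c by apply: Rmult_lt_0_compat; [apply: Rmin_glb_lt|]; lra.
have [c_le_delta c_le_co] : 4 * c <= delta /\ 4 * c <= 1 - delta.
  by rewrite /c; have := Rmin_l delta (1 - delta); have := Rmin_r delta (1 - delta); lra.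
have cK_gt0 : 0 < c ^ K by apply: pow_lt.
have cK_le1 : c ^ K <= 1 by rewrite -(pow1 K); apply: pow_incr; lra.
pose eps := c ^ K * c / 3.
have eps_gt0 : 0 < eps by rewrite /eps; nra.
have eps_le : eps <= c / 3 by rewrite /eps; nra.
have [m [X [Y [m_ge1 [[hX [hY _]] [hreg hdens]]]]]] := hyp eps ltac:(split; lra) 1%N.
pose F i j := Rb phi (X i) (Y j).
have m_ge1R : 1 <= INR m by apply: (le_INR 1); apply/leP.
have [F_dense coF_dense] : dense_pair F (eps * INR m) (delta - 2 * eps) /\
    dense_pair (coedge F) (eps * INR m) (1 - delta - 2 * eps).
  apply: regular_dense_pair; first nra.
  - by move=> A B hA hB; rewrite -!density_edge_density; apply: hreg.
  - by rewrite -density_edge_density.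
have small_r : 2 * (eps * INR m) <= c ^ K * INR #|[set: 'I_m]|.
  have : 0 <= c ^ K * INR m by nra.
  by rewrite cardsT card_ord /eps; nra.
have [a [b [_ _ hab]]] := half_graph_of_dense_pair (r := eps * INR m) (c := c)
  ltac:(nra) c_gt0 ltac:(lra)
  (dense_pair_weaken (c' := c) F_dense ltac:(lra))
  (dense_pair_weaken (c' := c) coF_dense ltac:(lra))
  (Ordinal m_ge1) (Ordinal m_ge1) (s := K) (A := setT) (B := setT)
  small_r small_r.
exists (X \o a), (Y \o b); split=> [i|j|i j hi hj] //=.
by rewrite (rwP (RbP _ _)) -/(F (a i) (b j)) hab.
Qed.

End RegularPairs.

Section FlatEncoding.
Variables (L : signature) (M : structure L) (phi : formula L) (k l : nat).
Local Open Scope nat_scope.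
Local Notation w := (k + l).

(* A sequence of tuples is stored flat: block i of d, of length k + l, holds the
   left tuple a_i followed by the right tuple b_i. *)
Definition left_tuple (d : nat -> M) (i : nat) : seq M :=
  mkseq (fun q => d (i * w + q)) k.
Definition right_tuple (d : nat -> M) (j : nat) : seq M :=
  mkseq (fun q => d (j * w + k + q)) l.

Lemma flat_tuples (x y : nat -> seq M) :
  (forall i, size (x i) = k) -> (forall j, size (y j) = l) ->
  exists d : nat -> M, (forall i, left_tuple d i = x i) /\ (forall j, right_tuple d j = y j).
Proof.
move=> hx hy.
exists (fun p => let q := p %% w in
  if q < k then nth (point M) (x (p %/ w)) q else nth (point M) (y (p %/ w)) (q - k)).
split=> [i|j].
- rewrite -[RHS](mkseq_nth (point M)) hx; apply/eq_in_map => q.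
  rewrite mem_iota => /andP [_ hq] /=; have hqw : q < w by lia.
  by rewrite divnMDl ?divn_small ?addn0 ?modnMDl ?modn_small ?hq //; lia.
- rewrite -[RHS](mkseq_nth (point M)) hy; apply/eq_in_map => q.
  rewrite mem_iota => /andP [_ hq] /=; have hqw : k + q < w by lia.
  rewrite -addnA divnMDl ?divn_small ?addn0 ?modnMDl ?modn_small //; last by lia.
  by rewrite ltnNge leq_addr addKn.
Qed.

Lemma half_graph_eq_on (K : nat) (d g : nat -> M) :
  (forall p, p < K * w -> d p = g p) ->
  half_graph phi K (left_tuple d) (right_tuple d) ->
  half_graph phi K (left_tuple g) (right_tuple g).
Proof.
move=> hdg hd i j hi hj.
have hblock n q : n < K -> q < w -> d (n * w + q) = g (n * w + q).
  move=> hn hq; apply: hdg; have : n.+1 * w <= K * w by rewrite leq_mul2r hn orbT.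
  by rewrite mulSn; lia.
rewrite -(hd i j hi hj) /left_tuple /right_tuple.
have -> : mkseq (fun q => g (i * w + q)) k = mkseq (fun q => d (i * w + q)) k.
  by apply/eq_in_map => q; rewrite mem_iota => hq; rewrite hblock //; lia.
have -> : mkseq (fun q => g (j * w + k + q)) l = mkseq (fun q => d (j * w + k + q)) l.
  by apply/eq_in_map => q; rewrite mem_iota => hq; rewrite -addnA hblock //; lia.
by [].
Qed.

End FlatEncoding.

Section ExtensionFormula.
Variables (L : signature) (M : structure L) (phi : formula L) (k l : nat).
Hypothesis phi_fv : fv_bounded phi k l.
Local Open Scope nat_scope.
Local Notation w := (k + l).

Definition slot (i j v : nat) : nat := if v < k then i * w + v else j * w + v.

(* Slots below t are the parameters 1..t of omega_saturated, slot t is the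
   variable 0 to be realized, and later slots keep their index. *)
Definition slot_var (t p : nat) : nat := if p < t then p.+1 else if p == t then 0 else p.

(* Variables that are not free in phi are sent beyond all slots, which keeps the
   renaming injective. *)
Definition pair_var (t i j v : nat) : nat :=
  if v < w then slot_var t (slot i j v) else v + (i * w + j * w + w + t).+1.

Definition half_graph_literal (t i j : nat) : formula L :=
  if i < j then rename (pair_var t i j) phi else fneg (rename (pair_var t i j) phi).

Definition extension_formula (t K : nat) : formula L :=
  fexs (iota t.+1 (K * w))
    (fbigand K (fun i => fbigand K (fun j => half_graph_literal t i j))).

Lemma slot_mod i j v : v < w -> slot i j v %% w = v.
Proof. by move=> hv; rewrite /slot; case: ifP => _; rewrite modnMDl modn_small. Qed.

Lemma slot_lt K i j v : i < K -> j < K -> v < w -> slot i j v < K * w.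
Proof.
move=> hi hj hv; rewrite /slot.
have : i.+1 * w <= K * w by rewrite leq_mul2r hi orbT.
have : j.+1 * w <= K * w by rewrite leq_mul2r hj orbT.
rewrite !mulSn; case: ifP => _; lia.
Qed.

Lemma slot_var_inj t : injective (slot_var t).
Proof.
move=> p1 p2; rewrite /slot_var.
by case: (ltnP p1 t); case: (ltnP p2 t); case: (p1 =P t); case: (p2 =P t); lia.
Qed.

Lemma pair_var_inj t i j : injective (pair_var t i j).
Proof.
have slot_le v : slot i j v <= i * w + j * w + v by rewrite /slot; case: ifP => _; lia.
have slot_var_le p : slot_var t p <= p.+1 by rewrite /slot_var; case: ifP => // _; case: ifP.
move=> v1 v2; rewrite /pair_var.
have := slot_var_le (slot i j v1); have := slot_var_le (slot i j v2).
have := slot_le v1; have := slot_le v2.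
case: (ltnP v1 w) => hv1; case: (ltnP v2 w) => hv2; try lia.
by move=> _ _ _ _ /slot_var_inj e; rewrite -(slot_mod i j hv1) -(slot_mod i j hv2) e.
Qed.

Lemma Rrel_slot (d : nat -> M) i j :
  Rrel phi (left_tuple k l d i) (right_tuple k l d j) <-> sat (d \o slot i j) phi.
Proof.
apply: eq_sat => v /phi_fv hv.
rewrite nth_cat /left_tuple /right_tuple size_mkseq /slot /=.
case: ifP => hk; first by rewrite nth_mkseq.
rewrite nth_mkseq; last by move: hv hk; lia.
by rewrite -addnA subnKC // leqNgt hk.
Qed.

Lemma sat_literals (e : nat -> M) t K :
  sat e (fbigand K (fun i => fbigand K (fun j => half_graph_literal t i j))) <->
  forall i j, i < K -> j < K -> (sat e (rename (pair_var t i j) phi) <-> i < j).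
Proof.
rewrite sat_fbigand; split=> [h i j hi hj|h i hi].
- move: (h i hi); rewrite sat_fbigand => /(_ j hj).
  by rewrite /half_graph_literal; case: ifP.
- rewrite sat_fbigand => j hj; have := h i j hi hj.
  by rewrite /half_graph_literal; case: ifP => _ /= [h1 h2]; [exact: h2|move/h1].
Qed.

Lemma sat_extension_formula (e : nat -> M) t K :
  sat e (extension_formula t K) <->
  exists d : nat -> M, [/\ forall p, p < t -> d p = e p.+1, d t = e 0 &
    half_graph phi K (left_tuple k l d) (right_tuple k l d)].
Proof.
rewrite /extension_formula sat_fexs; split.
- case=> f; set e' := fun v => if v \in _ then _ else _; move/sat_literals => hf.
  exists (e' \o slot_var t); split=> [p hp||i j hi hj].
  + by rewrite /= /e' /slot_var hp mem_iota ltnS leqNgt hp.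
  + by rewrite /= /e' /slot_var ltnn eqxx mem_iota ltn0.
  + rewrite Rrel_slot -(hf i j hi hj) sat_rename; last exact: pair_var_inj.
    by apply: eq_sat => v /phi_fv hv; rewrite /= /pair_var hv.
- case=> d [hd_par hd_t hd]; exists d; apply/sat_literals => i j hi hj.
  rewrite -(hd i j hi hj) Rrel_slot sat_rename; last exact: pair_var_inj.
  apply: eq_sat => v /phi_fv hv; rewrite /= /pair_var hv.
  have := slot_lt hi hj hv; set p := slot i j v => hp.
  rewrite /slot_var mem_iota; case: (ltnP p t) => [hpt|htp].
  + by rewrite (hd_par p hpt) ltnS leqNgt hpt.
  + case: (p =P t) => [->|hpt]; first by rewrite hd_t ltn0.
    by have -> : t < p < t.+1 + K * w by apply/andP; split; lia.
Qed.

Lemma free_in_extension_formula t K v : free_in v (extension_formula t K) -> v <= t.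
Proof.
case/free_in_fexs; rewrite mem_iota => hv.
case/free_in_fbigand => i hi /free_in_fbigand [j hj].
rewrite /half_graph_literal; case: ifP => _ /= /free_in_rename [u hvu /phi_fv hu];
  move: hv; rewrite hvu /pair_var hu; have := slot_lt hi hj hu;
  rewrite /slot_var; set p := slot i j u => hp;
  case: (ltnP p t) => hpt; try lia; case: (p =P t); lia.
Qed.

End ExtensionFormula.

Section Compactness.
Variables (L : signature) (M : structure L) (phi : formula L) (k l : nat).
Hypotheses (phi_fv : fv_bounded phi k l) (M_sat : omega_saturated M).
Local Open Scope nat_scope.

Definition extendable (t : nat) (c : nat -> M) : Prop :=
  forall K, exists d : nat -> M,
    (forall p, p < t -> d p = c p) /\ half_graph phi K (left_tuple k l d) (right_tuple k l d).

Lemma half_graph_le K K' (x y : nat -> seq M) :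
  K <= K' -> half_graph phi K' x y -> half_graph phi K x y.
Proof. by move=> hK h i j hi hj; apply: h; apply: leq_trans hK. Qed.

Lemma extendable_step t c : extendable t c -> exists a, extendable t.+1 (upd c t a).
Proof.
move=> hc; pose params v := c v.-1.
pose type := fun psi => exists K, psi = extension_formula phi k l t K.
have type_fv psi : type psi -> forall v, free_in v psi -> v <= t.
  by case=> K -> v /(free_in_extension_formula phi_fv).
have type_fin (ls : seq (formula L)) : (forall psi, List.In psi ls -> type psi) ->
    exists a, forall psi, List.In psi ls -> sat (upd params 0 a) psi.
  move=> hls; have [Kmax hKmax] : exists Kmax, forall psi, List.In psi ls ->
      exists2 K, K <= Kmax & psi = extension_formula phi k l t K.
    elim: ls hls => [|psi ls IH] hls; first by exists 0.
    have [Kmax hKmax] := IH (fun q hq => hls q (or_intror hq)).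
    have [K0 ->] := hls psi (or_introl erefl).
    exists (maxn K0 Kmax) => q [<-|/hKmax [K hK ->]]; first by exists K0; rewrite ?leq_maxl.
    by exists K => //; apply: leq_trans hK (leq_maxr _ _).
  have [d [hdc hd]] := hc Kmax; exists (d t) => psi /hKmax [K hK ->].
  apply/(sat_extension_formula phi_fv); exists d; split=> //.
  exact: half_graph_le hK hd.
have [a ha] := @M_sat t params type type_fv type_fin.
exists a => K.
have /(sat_extension_formula phi_fv) [d [hd_par hd_t hd]] := ha _ (ex_intro _ K erefl).
exists d; split=> // p; rewrite ltnS leq_eqVlt /upd => /predU1P [->|hp].
- by rewrite eqxx hd_t.
- by rewrite (ltn_eqF hp) hd_par.
Qed.

Fixpoint chain (t : nat) : nat -> M :=
  if t is t'.+1 then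
    let next a := upd (chain t') t' a in
    next (epsilon (inhabits (point M)) (fun a => extendable t (next a)))
  else fun _ => point M.

Lemma chain_extendable : extendable 0 (fun _ => point M) -> forall t, extendable t (chain t).
Proof.
move=> h0; elim=> [|t IH] //=.
exact: epsilon_spec (inhabits (point M)) _ (extendable_step IH).
Qed.

Lemma chain_stable t p : p < t -> chain t p = chain p.+1 p.
Proof.
elim: t => [|t IH] //; rewrite ltnS leq_eqVlt => /predU1P [->//|hp] /=.
by rewrite {1}/upd (ltn_eqF hp) IH.
Qed.

Lemma limit_half_graphs : (forall K, exists d : nat -> M,
    half_graph phi K (left_tuple k l d) (right_tuple k l d)) ->
  exists g : nat -> M, forall K, half_graph phi K (left_tuple k l g) (right_tuple k l g).
Proof.
move=> hK; have h0 : extendable 0 (fun _ => point M).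
  by move=> K; have [d hd] := hK K; exists d.
exists (fun p => chain p.+1 p) => K.
have [d [hd_chain hd]] := chain_extendable h0 (K * (k + l)) K.
by apply: half_graph_eq_on hd => p hp; rewrite hd_chain // chain_stable.
Qed.

End Compactness.

Lemma order_property_of_half_graphs (L : signature) (M : structure L) (phi : formula L)
    (k l : nat) (x y : nat -> seq M) :
  (forall i, size (x i) = k) -> (forall j, size (y j) = l) ->
  (forall K, half_graph phi K x y) -> order_property M phi k l.
Proof.
move=> hx hy hxy; exists x, y; split=> //; split=> // i j.
by apply: (hxy (maxn i j).+1); rewrite ltnS ?leq_maxl ?leq_maxr.
Qed.

Theorem mainTheorem4 (L : signature) (T : theory L) (M : structure L)
  (phi : formula L) (k l : nat) :
  complete_theory T -> models M T -> omega_saturated M ->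
  fv_bounded phi k l ->
  (exists delta : R, Rlt 0 delta /\ Rlt delta 1 /\
     forall eps : R, Rlt 0 eps /\ Rlt eps 1 -> forall n : nat,
       exists (m : nat) (X Y : 'I_m -> seq M),
         (n <= m)%N /\ bipartite_Rgraph k l X Y /\
         eps_regular phi eps X Y /\
         Rlt (Rabs (Rminus (density phi X Y setT setT) delta)) eps) ->
  order_property M phi k l.
Proof.
(* Saturation of M is all the compactness needed. *)
move=> _ _ M_sat phi_fv [delta [delta_gt0 [delta_lt1 hreg]]].
have finite K : exists d : nat -> M, half_graph phi K (left_tuple k l d) (right_tuple k l d).
  have [x [y [hx hy hxy]]] := finite_half_graphs (conj delta_gt0 delta_lt1) hreg K.
  have [d [hdx hdy]] := flat_tuples hx hy.
  by exists d => i j hi hj; rewrite hdx hdy; apply: hxy.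
have [g hg] := limit_half_graphs phi_fv M_sat finite.
apply: order_property_of_half_graphs hg => i; exact: size_mkseq.
Qed.
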